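(* Let $A$ be a non-symmetric haploid commutative $\Delta$-separable special Frobenius algebra in $\mathcal{C}$, with Nakayama automorphism $N_A$. Then $\mu\circ(N_A\otimes\mathrm{id}_A)\circ\Delta=0$.
   Context: Standing assumptions: $k$ is a field with $\mathrm{char}(k)\neq 2$. $\mathcal{C}$ is a $k$-linear additive idempotent-complete ribbon category, strict as a monoidal category, with bilinear tensor product and absolutely simple tensor unit ($\mathrm{End}_{\mathcal{C}}(1)=k\,\mathrm{id}_1$), with braiding $c$ and twist $\theta$. A Frobenius algebra $(A,\mu,\eta,\Delta,\epsilon)$ is an algebra and coalgebra with $(\mathrm{id}\otimes\mu)(\Delta\otimes\mathrm{id})=\Delta\mu=(\mu\otimes\mathrm{id})(\mathrm{id}\otimes\Delta)$. It is commutative if $\mu\circ c_{A,A}=\mu$; $\Delta$-separable if $\mu\circ\Delta=\mathrm{id}_A$; special if $\epsilon\circ\eta\in k^\times\mathrm{id}_1$ and $\mu\circ\Delta\in k^\times\mathrm{id}_A$; haploid if $\dim_k\mathrm{Hom}(1,A)=1$. The Nakayama automorphism is $N_A=\Phi_1^{-1}\circ\Phi_2$, where with $\kappa=\epsilon\circ\mu$, $\Phi_1=(\kappa\otimes\mathrm{id}_{A^*})(\mathrm{id}_A\otimes\mathrm{coev}_A)$ and $\Phi_2=(\mathrm{id}_{A^*}\otimes\kappa)(\widetilde{\mathrm{coev}}_A\otimes\mathrm{id}_A)$ are the isomorphisms $A\to A^*$ given by the Frobenius pairing and the two coevaluations of the pivotal structure; $A$ is symmetric if $N_A=\mathrm{id}_A$.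 *)

From HB Require Import structures.
From mathcomp Require Import all_boot all_order all_algebra.
Set Implicit Arguments. Unset Strict Implicit. Unset Printing Implicit Defensive.
Import GRing.Theory.
Local Open Scope ring_scope.

(* Data of a k-linear strict monoidal braided category with duals     *)
(* (left duality ev/coev, right duality tev/tcoev on the same dual    *)
(* object) and twist.  Strictness: the associativity and unit         *)
(* constraints are EQUALITIES of objects; morphisms are transported   *)
(* along them by [cast].                                              *)
Record ribbon_data (k : fieldType) := RibbonData {
  Ob : Type;
  Mor : Ob -> Ob -> lmodType k;
  comp : forall a b c : Ob, Mor b c -> Mor a b -> Mor a c;
  idm : forall a : Ob, Mor a a;
  otens : Ob -> Ob -> Ob;
  tunit : Ob;
  tensm : forall a b c d : Ob, Mor a b -> Mor c d -> Mor (otens a c) (otens b d);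
  tensA : forall a b c : Ob, otens (otens a b) c = otens a (otens b c);
  tens1l : forall a : Ob, otens tunit a = a;
  tens1r : forall a : Ob, otens a tunit = a;
  braid : forall a b : Ob, Mor (otens a b) (otens b a);
  twist : forall a : Ob, Mor a a;
  dual : Ob -> Ob;
  ev : forall a : Ob, Mor (otens (dual a) a) tunit;
  coev : forall a : Ob, Mor tunit (otens a (dual a));
  tev : forall a : Ob, Mor (otens a (dual a)) tunit;
  tcoev : forall a : Ob, Mor tunit (otens (dual a) a)
}.

Section RibbonDefs.
Variable k : fieldType.
Variable C : ribbon_data k.

Local Notation Ob := (Ob C).
Local Notation Mor := (@Mor k C).
Local Notation "f ◦ g" := (comp f g) (at level 40, left associativity).
Local Notation "f ⊗ g" := (tensm f g) (at level 35, right associativity).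
Local Notation "a ⊠ b" := (otens a b) (at level 35, right associativity).
Local Notation id := (@idm k C).
Local Notation tunit := (tunit C).
Local Notation twist := (@twist k C).
Local Notation braid := (@braid k C).
Local Notation dual := (@dual k C).
Local Notation ev := (@ev k C).
Local Notation coev := (@coev k C).
Local Notation tev := (@tev k C).
Local Notation tcoev := (@tcoev k C).
Local Notation otens := (@otens k C).
Local Notation tensA := (@tensA k C).
Local Notation tens1l := (@tens1l k C).
Local Notation tens1r := (@tens1r k C).
Local Notation comp := (@comp k C).
Local Notation tensm := (@tensm k C).

Definition cast (a b : Ob) (e : a = b) : Mor a b :=
  eq_rect a (fun x => Mor a x) (id a) b e.

Definition ldualm (a b : Ob) (f : Mor a b) : Mor (dual b) (dual a) :=
  cast (tens1l (dual a))
  ◦ (ev b ⊗ id (dual a))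
  ◦ ((id (dual b) ⊗ f) ⊗ id (dual a))
  ◦ cast (esym (tensA (dual b) a (dual a)))
  ◦ (id (dual b) ⊗ coev a)
  ◦ cast (esym (tens1r (dual b))).

Definition rdualm (a b : Ob) (f : Mor a b) : Mor (dual b) (dual a) :=
  cast (tens1r (dual a))
  ◦ (id (dual a) ⊗ tev b)
  ◦ (id (dual a) ⊗ (f ⊗ id (dual b)))
  ◦ cast (tensA (dual a) a (dual b))
  ◦ (tcoev a ⊗ id (dual b))
  ◦ cast (esym (tens1l (dual b))).

Definition is_iso (a b : Ob) (f : Mor a b) : Prop :=
  exists g : Mor b a, g ◦ f = id a /\ f ◦ g = id b.

Record ribbon_axioms : Prop := RibbonAxioms {
  compA : forall a b c d (f : Mor c d) (g : Mor b c) (h : Mor a b),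
      f ◦ (g ◦ h) = (f ◦ g) ◦ h;
  comp1l : forall a b (f : Mor a b), id b ◦ f = f;
  comp1r : forall a b (f : Mor a b), f ◦ id a = f;
  comp_linl : forall a b c (r : k) (f g : Mor b c) (h : Mor a b),
      (r *: f + g) ◦ h = r *: (f ◦ h) + g ◦ h;
  comp_linr : forall a b c (r : k) (f : Mor b c) (g h : Mor a b),
      f ◦ (r *: g + h) = r *: (f ◦ g) + f ◦ h;
  zero_obj : exists z : Ob, id z = 0;
  biprod : forall a b : Ob, exists (s : Ob) (i1 : Mor a s) (i2 : Mor b s)
      (p1 : Mor s a) (p2 : Mor s b),
      [/\ p1 ◦ i1 = id a, p2 ◦ i2 = id b, p1 ◦ i2 = 0, p2 ◦ i1 = 0
        & i1 ◦ p1 + i2 ◦ p2 = id s];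
  idem_split : forall a (e : Mor a a), e ◦ e = e ->
      exists (b : Ob) (r : Mor a b) (s : Mor b a), r ◦ s = id b /\ s ◦ r = e;
  tens_linl : forall a b c d (r : k) (f g : Mor a b) (h : Mor c d),
      (r *: f + g) ⊗ h = r *: (f ⊗ h) + g ⊗ h;
  tens_linr : forall a b c d (r : k) (f : Mor a b) (g h : Mor c d),
      f ⊗ (r *: g + h) = r *: (f ⊗ g) + f ⊗ h;
  tens_comp : forall a1 b1 c1 a2 b2 c2 (f1 : Mor b1 c1) (g1 : Mor a1 b1)
      (f2 : Mor b2 c2) (g2 : Mor a2 b2),
      (f1 ◦ g1) ⊗ (f2 ◦ g2) = (f1 ⊗ f2) ◦ (g1 ⊗ g2);
  tens_id : forall a b, id a ⊗ id b = id (a ⊠ b);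
  tensA_nat : forall a b c d e f (x : Mor a b) (y : Mor c d) (z : Mor e f),
      cast (tensA b d f) ◦ ((x ⊗ y) ⊗ z) = (x ⊗ (y ⊗ z)) ◦ cast (tensA a c e);
  tens1l_nat : forall a b (x : Mor a b),
      cast (tens1l b) ◦ (id tunit ⊗ x) = x ◦ cast (tens1l a);
  tens1r_nat : forall a b (x : Mor a b),
      cast (tens1r b) ◦ (x ⊗ id tunit) = x ◦ cast (tens1r a);
  end_one : forall f : Mor tunit tunit, exists r : k, f = r *: id tunit;
  id_one_neq0 : id tunit != 0;
  braid_nat : forall a b c d (f : Mor a b) (g : Mor c d),
      braid b d ◦ (f ⊗ g) = (g ⊗ f) ◦ braid a c;
  braid_iso : forall a b, is_iso (braid a b);
  hexagon1 : forall a b c,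
      braid a (b ⊠ c) =
        cast (esym (tensA b c a)) ◦ (id b ⊗ braid a c) ◦ cast (tensA b a c)
        ◦ (braid a b ⊗ id c) ◦ cast (esym (tensA a b c));
  hexagon2 : forall a b c,
      braid (a ⊠ b) c =
        cast (tensA c a b) ◦ (braid a c ⊗ id b) ◦ cast (esym (tensA a c b))
        ◦ (id a ⊗ braid b c) ◦ cast (tensA a b c);
  zigzag_l1 : forall a,
      cast (tens1r a) ◦ (id a ⊗ ev a) ◦ cast (tensA a (dual a) a)
      ◦ (coev a ⊗ id a) ◦ cast (esym (tens1l a)) = id a;
  zigzag_l2 : forall a,
      cast (tens1l (dual a)) ◦ (ev a ⊗ id (dual a))
      ◦ cast (esym (tensA (dual a) a (dual a)))
      ◦ (id (dual a) ⊗ coev a) ◦ cast (esym (tens1r (dual a))) = id (dual a);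
  zigzag_r1 : forall a,
      cast (tens1l a) ◦ (tev a ⊗ id a) ◦ cast (esym (tensA a (dual a) a))
      ◦ (id a ⊗ tcoev a) ◦ cast (esym (tens1r a)) = id a;
  zigzag_r2 : forall a,
      cast (tens1r (dual a)) ◦ (id (dual a) ⊗ tev a)
      ◦ cast (tensA (dual a) a (dual a))
      ◦ (tcoev a ⊗ id (dual a)) ◦ cast (esym (tens1l (dual a))) = id (dual a);
  sovereign : forall a b (f : Mor a b), ldualm f = rdualm f;
  twist_nat : forall a b (f : Mor a b), twist b ◦ f = f ◦ twist a;
  twist_iso : forall a, is_iso (twist a);
  twist_tens : forall a b,
      twist (a ⊠ b) = braid b a ◦ braid a b ◦ (twist a ⊗ twist b);
  twist_dual : forall a, twist (dual a) = ldualm (twist a);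
  tev_ribbon : forall a, tev a = ev a ◦ braid a (dual a) ◦ (twist a ⊗ id (dual a));
  tcoev_ribbon : forall a,
      tcoev a = (id (dual a) ⊗ twist a) ◦ braid a (dual a) ◦ coev a
}.

Section Frobenius.
Variables (A : Ob) (mu : Mor (A ⊠ A) A) (eta : Mor tunit A)
          (delta : Mor A (A ⊠ A)) (eps : Mor A tunit).

Definition algebra_axioms : Prop :=
  [/\ mu ◦ (mu ⊗ id A) = mu ◦ (id A ⊗ mu) ◦ cast (tensA A A A),
      mu ◦ (eta ⊗ id A) = cast (tens1l A)
    & mu ◦ (id A ⊗ eta) = cast (tens1r A)].

Definition coalgebra_axioms : Prop :=
  [/\ cast (tensA A A A) ◦ (delta ⊗ id A) ◦ delta = (id A ⊗ delta) ◦ delta,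
      (eps ⊗ id A) ◦ delta = cast (esym (tens1l A))
    & (id A ⊗ eps) ◦ delta = cast (esym (tens1r A))].

Definition frobenius_relations : Prop :=
  (id A ⊗ mu) ◦ cast (tensA A A A) ◦ (delta ⊗ id A) = delta ◦ mu /\
  delta ◦ mu = (mu ⊗ id A) ◦ cast (esym (tensA A A A)) ◦ (id A ⊗ delta).

Definition frobenius_algebra : Prop :=
  [/\ algebra_axioms, coalgebra_axioms & frobenius_relations].

Definition commutative_alg : Prop := mu ◦ braid A A = mu.

Definition delta_separable : Prop := mu ◦ delta = id A.

Definition special : Prop :=
  (exists2 r : k, r != 0 & eps ◦ eta = r *: id tunit) /\
  (exists2 s : k, s != 0 & mu ◦ delta = s *: id A).

(* dim_k Mor(1, A) = 1 *)
Definition haploid : Prop :=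
  exists2 f : Mor tunit A, f != 0 & forall g : Mor tunit A, exists r : k, g = r *: f.

Definition kappa : Mor (A ⊠ A) tunit := eps ◦ mu.

Definition Phi1 : Mor A (dual A) :=
  cast (tens1l (dual A)) ◦ (kappa ⊗ id (dual A))
  ◦ cast (esym (tensA A A (dual A))) ◦ (id A ⊗ coev A) ◦ cast (esym (tens1r A)).

Definition Phi2 : Mor A (dual A) :=
  cast (tens1r (dual A)) ◦ (id (dual A) ⊗ kappa)
  ◦ cast (tensA (dual A) A A) ◦ (tcoev A ⊗ id A) ◦ cast (esym (tens1l A)).

(* N is the Nakayama automorphism N_A = Phi1^{-1} o Phi2, i.e. the
   (unique, Phi1 being invertible) morphism with Phi1 o N = Phi2. *)
Definition is_nakayama (N : Mor A A) : Prop := Phi1 ◦ N = Phi2.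

End Frobenius.
End RibbonDefs.

Notation "f ◦ g" := (comp f g) (at level 40, left associativity).
Notation "f ⊗ g" := (tensm f g) (at level 35, right associativity).

(* Commutativity makes the twist multiplicative, θ ◦ μ = μ ◦ (θ ⊗ θ), and
   comparing Φ₁ ◦ N = Φ₂ through the nondegenerate form κ = ε ◦ μ gives
   N = t⁻¹ θ, where θ_1 = t id_1.  The map f = μ ◦ (θ ⊗ id) ◦ Δ satisfies
   f(ab) = f(a) b and f(ab) = θ(a) f(b) by the Frobenius relations.  As A is
   haploid, f ◦ η = c η, so f = c id = c θ.  If c ≠ 0 then θ_A = id, which
   forces t = 1 and N = id; hence c = 0 and μ ◦ (N ⊗ id) ◦ Δ = t⁻¹ f = 0. *)

From Pilot Require Import Defs.
From HB Require Import structures.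
From mathcomp Require Import all_boot all_order all_algebra.
From Stdlib Require Import ProofIrrelevance.
Import GRing.Theory.
Local Open Scope ring_scope.
Set Implicit Arguments. Unset Strict Implicit.

Section Ribbon.
Variable k : fieldType.
Variable C : ribbon_data k.
Hypothesis HC : ribbon_axioms C.
Local Notation Ob := (Ob C).
Local Notation Mor := (@Mor k C).
Local Notation id := (@idm k C).
Local Notation I := (tunit C).
Local Notation "a ⊠ b" := (@otens k C a b) (at level 35, right associativity).

Let compA := Defs.compA HC.
Let comp1l := Defs.comp1l HC.
Let comp1r := Defs.comp1r HC.
Let tens_comp := Defs.tens_comp HC.
Let tens_id := Defs.tens_id HC.

Lemma comp0l (a b c : Ob) (h : Mor a b) : (0 : Mor b c) ◦ h = 0.
Proof. by have := comp_linl HC (-1) (0 : Mor b c) 0 h; rewrite !scaleN1r !addNr. Qed.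

Lemma comp0r (a b c : Ob) (f : Mor b c) : f ◦ (0 : Mor a b) = 0.
Proof. by have := comp_linr HC (-1) f (0 : Mor a b) 0; rewrite !scaleN1r !addNr. Qed.

Lemma compZl (a b c : Ob) r (f : Mor b c) (h : Mor a b) :
  (r *: f) ◦ h = r *: (f ◦ h).
Proof. by have := comp_linl HC r f 0 h; rewrite !addr0 comp0l addr0. Qed.

Lemma compZr (a b c : Ob) r (f : Mor b c) (h : Mor a b) :
  f ◦ (r *: h) = r *: (f ◦ h).
Proof. by have := comp_linr HC r f h 0; rewrite !addr0 comp0r addr0. Qed.

Lemma tensZl (a b c d : Ob) r (f : Mor a b) (h : Mor c d) :
  (r *: f) ⊗ h = r *: (f ⊗ h).
Proof.
have tens0l : (0 : Mor a b) ⊗ h = 0.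
  by have := tens_linl HC (-1) (0 : Mor a b) 0 h; rewrite !scaleN1r !addNr.
by have := tens_linl HC r f 0 h; rewrite !addr0 tens0l addr0.
Qed.

Lemma tensZr (a b c d : Ob) r (f : Mor a b) (h : Mor c d) :
  f ⊗ (r *: h) = r *: (f ⊗ h).
Proof.
have tens0r : f ⊗ (0 : Mor c d) = 0.
  by have := tens_linr HC (-1) f (0 : Mor c d) 0; rewrite !scaleN1r !addNr.
by have := tens_linr HC r f h 0; rewrite !addr0 tens0r addr0.
Qed.

Lemma tens_compl (a b c d : Ob) (f : Mor b c) (g : Mor a b) :
  (f ◦ g) ⊗ id d = (f ⊗ id d) ◦ (g ⊗ id d).
Proof. by rewrite -tens_comp comp1l. Qed.

Lemma tens_compr (a b c d : Ob) (f : Mor b c) (g : Mor a b) :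
  id d ⊗ (f ◦ g) = (id d ⊗ f) ◦ (id d ⊗ g).
Proof. by rewrite -tens_comp comp1l. Qed.

Lemma tens_idr_idl (a b c d : Ob) (f : Mor a b) (g : Mor c d) :
  f ⊗ g = (f ⊗ id d) ◦ (id a ⊗ g).
Proof. by rewrite -tens_comp comp1l comp1r. Qed.

Lemma tens_idl_idr (a b c d : Ob) (f : Mor a b) (g : Mor c d) :
  f ⊗ g = (id b ⊗ g) ◦ (f ⊗ id c).
Proof. by rewrite -tens_comp comp1l comp1r. Qed.

Lemma comp_subst2 (a b c d : Ob) (f : Mor b c) (g : Mor a b) (u : Mor a c)
    (h : Mor d a) :
  f ◦ g = u -> f ◦ (g ◦ h) = u ◦ h.
Proof. by move=> <-; rewrite compA. Qed.

Lemma comp_subst3 (a b c e d : Ob) (f : Mor b c) (g : Mor e b) (g' : Mor a e)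
    (u : Mor a c) (h : Mor d a) :
  f ◦ g ◦ g' = u -> f ◦ (g ◦ (g' ◦ h)) = u ◦ h.
Proof. by move=> <-; rewrite !compA. Qed.

(* Objects carry no decidable equality, so this needs proof irrelevance. *)
Lemma cast_irrelevance (a b : Ob) (e1 e2 : a = b) : cast e1 = cast e2.
Proof. by rewrite (proof_irrelevance _ e1 e2). Qed.

Lemma cast_id (a : Ob) (e : a = a) : cast e = id a.
Proof. exact: (cast_irrelevance e erefl). Qed.

Lemma cast_comp (a b c : Ob) (e1 : b = c) (e2 : a = b) :
  cast e1 ◦ cast e2 = cast (etrans e2 e1).
Proof. by case: c / e1; exact: comp1l. Qed.

Lemma cast_compA (a b c d : Ob) (e1 : b = c) (e2 : a = b) (h : Mor d a) :
  cast e1 ◦ (cast e2 ◦ h) = cast (etrans e2 e1) ◦ h.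
Proof. by rewrite compA cast_comp. Qed.

Lemma cast_tensl (a b c : Ob) (e : a = b) :
  cast e ⊗ id c = cast (congr1 (fun z => z ⊠ c) e).
Proof. by case: b / e; rewrite !cast_id; exact: tens_id. Qed.

Lemma cast_tensr (a b c : Ob) (e : a = b) :
  id c ⊗ cast e = cast (congr1 (fun z => c ⊠ z) e).
Proof. by case: b / e; rewrite !cast_id; exact: tens_id. Qed.

Ltac rassoc := rewrite -?compA.
Ltac cast_merge :=
  rassoc; rewrite ?cast_tensl ?cast_tensr ?cast_compA ?cast_comp.
Ltac cast_done :=
  solve [repeat first [reflexivity | apply: cast_irrelevance | congr (_ ◦ _)]].

Lemma tensA_natl (a b c d e f : Ob) (x : Mor a b) (y : Mor c d) (z : Mor e f) :
  (x ⊗ y) ⊗ z = cast (esym (tensA b d f)) ◦ (x ⊗ (y ⊗ z)) ◦ cast (tensA a c e).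
Proof. by rewrite -compA -(tensA_nat HC) compA cast_comp cast_id comp1l. Qed.

Lemma tensA_natr (a b c d e f : Ob) (x : Mor a b) (y : Mor c d) (z : Mor e f) :
  x ⊗ (y ⊗ z) = cast (tensA b d f) ◦ ((x ⊗ y) ⊗ z) ◦ cast (esym (tensA a c e)).
Proof. by rewrite (tensA_nat HC) -compA cast_comp cast_id comp1r. Qed.

Lemma tensA_nat_inv (a b c d e f : Ob) (x : Mor a b) (y : Mor c d) (z : Mor e f) :
  cast (esym (tensA b d f)) ◦ (x ⊗ (y ⊗ z)) =
  ((x ⊗ y) ⊗ z) ◦ cast (esym (tensA a c e)).
Proof. by rewrite tensA_natl -!compA cast_comp cast_id comp1r. Qed.

Lemma tens1r_nat_inv (a b : Ob) (x : Mor a b) :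
  cast (esym (tens1r b)) ◦ x = (x ⊗ id I) ◦ cast (esym (tens1r a)).
Proof.
rewrite -[RHS]comp1l -(cast_id (etrans (tens1r b) (esym (tens1r b)))) -cast_comp.
by rewrite -!compA (compA _ (x ⊗ _)) (tens1r_nat HC) -!compA cast_comp cast_id comp1r.
Qed.

(* The composite (K ⊗ id) ◦ (id ⊗ D) : X -> Z bending the strand Y;
   [Phi1] and [Phi2] are the left and right instances of this shape. *)
Definition ltranspose (X Y Z : Ob) (K : Mor (X ⊠ Y) I) (D : Mor I (Y ⊠ Z)) :
    Mor X Z :=
  cast (tens1l Z) ◦ (K ⊗ id Z) ◦ cast (esym (tensA X Y Z))
  ◦ (id X ⊗ D) ◦ cast (esym (tens1r X)).

Definition rtranspose (X Y Z : Ob) (K : Mor (Y ⊠ X) I) (D : Mor I (Z ⊠ Y)) :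
    Mor X Z :=
  cast (tens1r Z) ◦ (id Z ⊗ K) ◦ cast (tensA Z Y X)
  ◦ (D ⊗ id X) ◦ cast (esym (tens1l X)).

Lemma ltranspose_comp (W X Y Z : Ob) (K : Mor (X ⊠ Y) I) (D : Mor I (Y ⊠ Z))
    (f : Mor W X) :
  ltranspose K D ◦ f = ltranspose (K ◦ (f ⊗ id Y)) D.
Proof.
rewrite /ltranspose; rassoc.
rewrite tens1r_nat_inv (comp_subst2 _ (esym (tens_idl_idr _ _))).
rewrite (tens_idr_idl f D) -[id (Y ⊠ Z)]tens_id; rassoc.
by rewrite (comp_subst2 _ (tensA_nat_inv _ _ _)) tens_compl; rassoc.
Qed.

Lemma ev_ltranspose (a X : Ob) (g : Mor (X ⊠ a) I) :
  ev a ◦ (ltranspose g (coev a) ⊗ id a) = g.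
Proof.
rewrite /ltranspose !tens_compl cast_tensl; rassoc.
have -> : cast (congr1 (fun z => z ⊠ a) (tens1l (dual a))) =
          cast (tens1l (dual a ⊠ a)) ◦ cast (tensA I (dual a) a).
  by rewrite cast_comp; apply: cast_irrelevance.
rassoc; rewrite (comp_subst2 _ (esym (tens1l_nat HC _))).
rewrite (comp_subst2 _ (tensA_nat HC _ _ _)) tens_id; rassoc.
rewrite (comp_subst2 _ (esym (tens_idl_idr _ _))) tens_idr_idl.
rewrite (cast_irrelevance (tens1l I) (tens1r I)).
rassoc; rewrite (comp_subst2 _ (tens1r_nat HC _)) -compA.
rewrite -[RHS]comp1r; congr (_ ◦ _).
rewrite -tens_id (tensA_natl (id X) (id a) (ev a)) (tensA_natl (id X) (coev a) (id a)).
rewrite -[X in _ = _ ⊗ X](zigzag_l1 HC a) !tens_compr.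
by cast_merge; cast_done.
Qed.

Lemma tev_rtranspose (a X : Ob) (g : Mor (a ⊠ X) I) :
  tev a ◦ (id a ⊗ rtranspose g (tcoev a)) = g.
Proof.
rewrite /rtranspose !tens_compr cast_tensr; rassoc.
have -> : cast (congr1 (fun z => a ⊠ z) (tens1r (dual a))) =
          cast (tens1r (a ⊠ dual a)) ◦ cast (esym (tensA a (dual a) I)).
  by rewrite cast_comp; apply: cast_irrelevance.
rassoc; rewrite (comp_subst2 _ (esym (tens1r_nat HC _))).
rewrite (comp_subst2 _ (tensA_nat_inv _ _ _)) tens_id; rassoc.
rewrite (comp_subst2 _ (esym (tens_idr_idl _ _))) tens_idl_idr.
rewrite (cast_irrelevance (tens1r I) (tens1l I)).
rassoc; rewrite (comp_subst2 _ (tens1l_nat HC _)) -compA.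
rewrite -[RHS]comp1r; congr (_ ◦ _).
rewrite -tens_id (tensA_natr (tev a) (id a) (id X)) (tensA_natr (id a) (tcoev a) (id X)).
rewrite -[X in _ = X ⊗ _](zigzag_r1 HC a) !tens_compl.
by cast_merge; cast_done.
Qed.

Lemma twist_unit_scalar : exists2 t : k, t != 0 & twist I = t *: id I.
Proof.
have [t Ht] := end_one HC (twist I); exists t => //.
apply: contra_neq (id_one_neq0 HC) => t0.
have [ti [ti_twist _]] := twist_iso HC I.
by rewrite -ti_twist Ht t0 scale0r comp0r.
Qed.

Lemma twist_unit_scalar_eq1 (a : Ob) (f : Mor a I) (t : k) :
  f != 0 -> twist a = id a -> twist I = t *: id I -> t = 1.
Proof.
move=> f0 twist_a Ht; have := twist_nat HC f.
rewrite twist_a comp1r Ht compZl comp1l => /eqP.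
by rewrite -subr_eq0 -{2}[f]scale1r -scalerBl scaler_eq0 (negPf f0) orbF subr_eq0 => /eqP.
Qed.

Lemma haploid_span (A : Ob) (x : Mor I A) :
  haploid A -> x != 0 -> forall g : Mor I A, exists c : k, g = c *: x.
Proof.
move=> [h _ Hh] x0 g.
have [s Hs] := Hh x; have [r Hr] := Hh g.
have s0 : s != 0 by apply: contra_neq x0 => s0; rewrite Hs s0 scale0r.
by exists (r / s); rewrite Hr Hs scalerA divfK.
Qed.

Section Frobenius.
Variables (A : Ob) (mu : Mor (A ⊠ A) A) (eta : Mor I A)
          (delta : Mor A (A ⊠ A)) (eps : Mor A I).
Hypothesis HF : frobenius_algebra mu eta delta eps.
Local Notation kappa := (kappa mu eps).

Lemma unit_counit_neq0 : special mu eta delta eps -> eta != 0 /\ eps != 0.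
Proof.
move=> [[r r0 Her] _].
have eps_eta0 : eps ◦ eta != 0 by rewrite Her scaler_eq0 negb_or r0 (id_one_neq0 HC).
by split; apply: contra_neq eps_eta0 => ->; rewrite ?comp0l ?comp0r.
Qed.

Lemma ltranspose_kappa_copairing : ltranspose kappa (delta ◦ eta) = id A.
Proof.
case: HF => [[_ _ unit_r] [_ counit_l _] [_ frob_r]].
rewrite /ltranspose /kappa tens_compl tens_compr; rassoc.
rewrite (comp_subst3 _ (esym frob_r)); rassoc.
rewrite (comp_subst2 _ unit_r) (comp_subst2 _ counit_l); cast_merge.
exact: cast_id.
Qed.

Lemma kappa_nondegenerate (X : Ob) (g h : Mor X A) :
  kappa ◦ (g ⊗ id A) = kappa ◦ (h ⊗ id A) -> g = h.
Proof.
move=> E; rewrite -[g]comp1l -[h]comp1l -ltranspose_kappa_copairing.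
by rewrite !ltranspose_comp E.
Qed.

Lemma ev_Phi1 : ev A ◦ (Phi1 mu eps ⊗ id A) = kappa.
Proof. exact: ev_ltranspose. Qed.

Lemma rmodule_endo_scalar (f : Mor A A) (c : k) :
  f ◦ mu = mu ◦ (f ⊗ id A) -> f ◦ eta = c *: eta -> f = c *: id A.
Proof.
case: HF => [[_ unit_l _] _ _] f_mu f_eta.
have U : mu ◦ (eta ⊗ id A) ◦ cast (esym (tens1l A)) = id A.
  by rewrite unit_l cast_comp cast_id.
rewrite -[LHS]comp1r -{1}U !compA f_mu -(compA mu) -tens_compl f_eta.
by rewrite tensZl compZr compZl U.
Qed.

Lemma twisted_lmodule_endo_scalar (f : Mor A A) (c : k) :
  f ◦ mu = mu ◦ (twist A ⊗ f) -> f ◦ eta = c *: eta -> f = c *: twist A.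
Proof.
case: HF => [[_ _ unit_r] _ _] f_mu f_eta.
have U : mu ◦ (id A ⊗ eta) ◦ cast (esym (tens1r A)) = id A.
  by rewrite unit_r cast_comp cast_id.
rewrite -[LHS]comp1r -{1}U !compA f_mu -(compA mu) -tens_comp comp1r f_eta.
rewrite tensZr compZr compZl (tens_idl_idr (twist A) eta) compA unit_r.
by rewrite (tens1r_nat HC) -compA cast_comp cast_id comp1r.
Qed.

Definition twisted_handle : Mor A A := mu ◦ ((twist A ⊗ id A) ◦ delta).

Lemma twisted_handle_rmodule :
  twisted_handle ◦ mu = mu ◦ (twisted_handle ⊗ id A).
Proof.
case: HF => [[mulA _ _] _ [frob_l _]].
rewrite /twisted_handle !tens_compl; rassoc; rewrite -frob_l; rassoc.
rewrite (comp_subst2 _ (esym (tens_idr_idl _ _))) (tens_idl_idr (twist A) mu).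
rewrite -[id (A ⊠ A)]tens_id; rassoc.
by rewrite (comp_subst2 _ (esym (tensA_nat HC _ _ _))); rassoc;
   rewrite (comp_subst3 _ (esym mulA)); rassoc.
Qed.

Section Commutative.
Hypothesis Hcomm : commutative_alg mu.

Lemma kappa_braid_inv (ci : Mor (A ⊠ A) (A ⊠ A)) :
  braid A A ◦ ci = id _ -> kappa ◦ ci = kappa.
Proof. by move=> braid_ci; rewrite /kappa -{1}Hcomm -!compA braid_ci comp1r. Qed.

(* By [tev_ribbon], [tev A] is [ev A] up to a braiding, which commutativity
   absorbs into [kappa], and a twist. *)
Lemma ev_Phi2 (ti : Mor A A) :
  twist A ◦ ti = id A -> ev A ◦ (Phi2 mu eps ⊗ id A) = kappa ◦ (id A ⊗ ti).
Proof.
move=> twist_ti.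
have [cd [cd_braid braid_cd]] := braid_iso HC A (dual A).
have [ci [ci_braid braid_ci]] := braid_iso HC A A.
have ev_tev : ev A = tev A ◦ (ti ⊗ id _) ◦ cd.
  rewrite (tev_ribbon HC) -!compA (compA (_ ⊗ _)) -tens_compl twist_ti tens_id.
  by rewrite comp1l braid_cd comp1r.
have cd_Phi2 : cd ◦ (Phi2 mu eps ⊗ id A) = (id A ⊗ Phi2 mu eps) ◦ ci.
  rewrite -[LHS]comp1r -braid_ci !compA -(compA cd) -(braid_nat HC).
  by rewrite compA cd_braid comp1l.
have ti_ci : (ti ⊗ id A) ◦ ci = ci ◦ (id A ⊗ ti).
  rewrite -[LHS]comp1l -ci_braid -!compA (compA (braid _ _)) (braid_nat HC).
  by rewrite -!compA braid_ci comp1r.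
rewrite ev_tev -!compA cd_Phi2 (compA (ti ⊗ _)) -tens_idr_idl tens_idl_idr !compA.
by rewrite tev_rtranspose -compA ti_ci compA kappa_braid_inv.
Qed.

(* The double braiding in [twist_tens] is absorbed by commutativity. *)
Lemma twist_mu : twist A ◦ mu = mu ◦ (twist A ⊗ twist A).
Proof. by rewrite (twist_nat HC) (twist_tens HC) !compA Hcomm Hcomm. Qed.

Lemma kappa_twist (t : k) :
  twist I = t *: id I -> kappa ◦ (twist A ⊗ twist A) = t *: kappa.
Proof.
move=> Ht; rewrite /kappa -compA -twist_mu compA -(twist_nat HC) Ht.
by rewrite compZl comp1l compZl.
Qed.

Lemma nakayama_twist (t : k) (N : Mor A A) :
  twist I = t *: id I -> t != 0 -> is_nakayama mu eps N -> N = t^-1 *: twist A.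
Proof.
move=> Ht t0 HN; have [ti [_ twist_ti]] := twist_iso HC A.
apply: kappa_nondegenerate.
rewrite -[X in X ◦ (N ⊗ _) = _]ev_Phi1 -compA -tens_compl HN (ev_Phi2 twist_ti).
rewrite tensZl compZr.
have -> : twist A ⊗ id A = (twist A ⊗ twist A) ◦ (id A ⊗ ti).
  by rewrite -tens_comp comp1r twist_ti.
by rewrite compA (kappa_twist Ht) compZl scalerA mulVf // scale1r.
Qed.

Lemma twisted_handle_twisted_lmodule :
  twisted_handle ◦ mu = mu ◦ (twist A ⊗ twisted_handle).
Proof.
case: HF => [[mulA _ _] _ [_ frob_r]].
rewrite /twisted_handle; rassoc; rewrite frob_r; rassoc.
rewrite (comp_subst2 _ (esym (tens_compl _ _ _))) twist_mu tens_compl; rassoc.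
rewrite (comp_subst2 _ mulA); rassoc; rewrite (comp_subst2 _ (tensA_nat HC _ _ _)); rassoc.
rewrite cast_compA cast_id comp1l.
rewrite (comp_subst2 _ (esym (tens_comp _ _ _ _))) comp1l -tens_comp comp1r.
by rewrite -compA.
Qed.

End Commutative.
End Frobenius.
End Ribbon.

Theorem mainTheorem4 (k : fieldType) (C : ribbon_data k)
    (A : Ob C) (mu : Mor (otens A A) A) (eta : Mor (tunit C) A)
    (delta : Mor A (otens A A)) (eps : Mor A (tunit C)) (N : Mor A A) :
  (2%:R : k) != 0 ->
  ribbon_axioms C ->
  frobenius_algebra mu eta delta eps ->
  commutative_alg mu ->
  delta_separable mu delta ->
  special mu eta delta eps ->
  haploid A ->
  is_nakayama mu eps N ->
  N != idm A ->
  mu ◦ ((N ⊗ idm A) ◦ delta) = 0.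
Proof.
move=> _ HC HF Hcomm _ Hspecial Hhaploid HN N_neq1.
have [t t0 Ht] := twist_unit_scalar HC.
have N_twist := nakayama_twist HC HF Hcomm Ht t0 HN.
have [eta0 eps0] := unit_counit_neq0 HC Hspecial.
have [c Hc] := haploid_span Hhaploid eta0 (twisted_handle mu delta ◦ eta).
have handle_id := rmodule_endo_scalar HC HF (twisted_handle_rmodule HC HF) Hc.
have handle_twist :=
  twisted_lmodule_endo_scalar HC HF (twisted_handle_twisted_lmodule HC HF Hcomm) Hc.
rewrite N_twist (tensZl HC) (compZl HC) (compZr HC) -/(twisted_handle mu delta).
rewrite handle_id.
have [-> | c0] := eqVneq c 0; first by rewrite scale0r scaler0.
have twist1 : twist A = idm A by apply: (scalerI c0); rewrite -handle_id -handle_twist.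
move: N_neq1; rewrite N_twist twist1 (twist_unit_scalar_eq1 HC eps0 twist1 Ht).
by rewrite invr1 scale1r eqxx.
Qed.
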